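(* Let $F$ be an Archimedean vector lattice and $E$ a regular sublattice of $F$. Then the order adherence $\overline{E}^{1}_{o}$ of $E$ is a regular sublattice of $F$ in which $E$ is order dense, and every regular sublattice $H$ of $F$ in which $E$ is order dense satisfies $H\subset\overline{E}^{1}_{o}$.
   Context: A net order converges to $f$ if there is a set $G$ with $\bigwedge G=0$ such that for each $g\in G$ the net is eventually in $[f-g,f+g]$. The order adherence $\overline{E}^1_o$ is the set of order limits (in $F$) of nets in $E$. A sublattice $E\subset F$ is regular if for every $G\subset E$ with $\bigwedge_E G=0$ one has $\bigwedge_F G=0$. $E$ is order dense in a sublattice $H\supset E$ if for every $h\in H$ with $h>0$ there is $e\in E$ with $0<e\le h$. *)

From HB Require Import structures.
From mathcomp Require Import all_boot all_order all_algebra.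
From mathcomp Require Import reals.
Set Implicit Arguments. Unset Strict Implicit. Unset Printing Implicit Defensive.
Import Order.TTheory GRing.Theory Num.Theory.
Local Open Scope ring_scope.

Section VectorLattice.
Variables (R : realType) (V : lmodType R) (le : V -> V -> Prop).

Definition is_lower_bound (G : V -> Prop) (x : V) := forall g, G g -> le x g.
Definition is_upper_bound (G : V -> Prop) (x : V) := forall g, G g -> le g x.

Definition is_inf_in (A G : V -> Prop) (x : V) :=
  A x /\ is_lower_bound G x /\ (forall y, A y -> is_lower_bound G y -> le y x).
Definition is_sup_in (A G : V -> Prop) (x : V) :=
  A x /\ is_upper_bound G x /\ (forall y, A y -> is_upper_bound G y -> le x y).

Definition full : V -> Prop := fun _ => True.
Definition pair2 (x y : V) : V -> Prop := fun z => z = x \/ z = y.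

Definition vector_lattice :=
  (forall x, le x x) /\
  (forall x y, le x y -> le y x -> x = y) /\
  (forall x y z, le x y -> le y z -> le x z) /\
  (forall x y z, le x y -> le (x + z) (y + z)) /\
  (forall (a : R) x y, 0 <= a -> le x y -> le (a *: x) (a *: y)) /\
  (forall x y, (exists s, is_sup_in full (pair2 x y) s) /\
               (exists i, is_inf_in full (pair2 x y) i)).

Definition archimedean :=
  forall x y, le 0 x -> (forall n : nat, le (n%:R *: x) y) -> x = 0.

Definition lt x y := le x y /\ x <> y.

Definition sublattice (E : V -> Prop) :=
  [/\ E 0,
      (forall x y, E x -> E y -> E (x + y)),
      (forall (a : R) x, E x -> E (a *: x)),
      (forall x y s, E x -> E y -> is_sup_in full (pair2 x y) s -> E s) &
      (forall x y i, E x -> E y -> is_inf_in full (pair2 x y) i -> E i)].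

Definition regular (E : V -> Prop) :=
  forall G : V -> Prop, (forall g, G g -> E g) ->
    is_inf_in E G 0 -> is_inf_in full G 0.

Definition in_interval (a b x : V) := le a x /\ le x b.

Definition directed (I : Type) (leI : I -> I -> Prop) :=
  [/\ inhabited I, (forall i, leI i i),
      (forall i j k, leI i j -> leI j k -> leI i k) &
      (forall i j, exists k, leI i k /\ leI j k)].

Definition order_converges (I : Type) (leI : I -> I -> Prop) (x : I -> V) (f : V) :=
  exists G : V -> Prop, is_inf_in full G 0 /\
    forall g, G g -> exists i0, forall i, leI i0 i -> in_interval (f - g) (f + g) (x i).

Definition order_adherence (E : V -> Prop) : V -> Prop := fun f =>
  exists (I : Type) (leI : I -> I -> Prop) (x : I -> V),
    directed leI /\ (forall i, E (x i)) /\ order_converges leI x f.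

Definition order_dense_in (E H : V -> Prop) :=
  (forall e, E e -> H e) /\
  (forall h, H h -> lt 0 h -> exists e, E e /\ lt 0 e /\ le e h).

End VectorLattice.

(* Call E sup-dense in H when every h >= 0 in H is the supremum in F of
   E ∩ [0, h].  Regularity of E makes E sup-dense in its order adherence: if h
   is the order limit of a net (x_b) in E and u is an upper bound of E ∩ [0, h]
   with h ≰ u, then regularity applied to the positive parts (x_b - a)^+ gives
   e > 0 in E with a + e <= h for every a ∈ E ∩ [0, h], and iterating a ↦ a + e
   contradicts the Archimedean property.  The same Archimedean argument, with
   regularity of H in place of the net, makes E sup-dense in every regular H in
   which it is order dense; the upward directed set E ∩ [0, h], viewed as a net,
   then order converges to h, so H lies in the adherence.  Conversely, if E is
   sup-dense in H then E is order dense in H, and H is regular: a positive lower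
   bound w in F of a nonempty G ⊆ H meets some a0 ∈ E ∩ [0, g0], and regularity
   of E turns w ∧ a0 into a positive lower bound of G inside E. *)

From HB Require Import structures.
From mathcomp Require Import all_boot all_order all_algebra.
From mathcomp Require Import boolp reals.
Import Order.TTheory GRing.Theory Num.Theory.
Set Implicit Arguments. Unset Strict Implicit. Unset Printing Implicit Defensive.
Local Open Scope ring_scope.

Lemma directed_prod I J (leI : I -> I -> Prop) (leJ : J -> J -> Prop) :
  directed leI -> directed leJ ->
  directed (fun p q : I * J => leI p.1 q.1 /\ leJ p.2 q.2).
Proof.
case=> [[i0] reflI transI upI] [[j0] reflJ transJ upJ]; split.
- exact: inhabits (i0, j0).
- by [].
- by move=> p q r [pq1 pq2] [qr1 qr2]; split; [apply: transI qr1 | apply: transJ qr2].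
- move=> [i j] [i' j']; have [k [ik i'k]] := upI i i'; have [l [jl j'l]] := upJ j j'.
  by exists (k, l).
Qed.

Section VectorLatticeTheory.
Variables (R : realType) (V : lmodType R) (le : V -> V -> Prop).
Hypothesis hVL : vector_lattice le.
Hypothesis hArch : archimedean le.
Local Notation full := (@full R V).

Lemma vle_refl x : le x x.
Proof. by case: hVL. Qed.

Lemma vle_anti x y : le x y -> le y x -> x = y.
Proof. by case: hVL => _ [+ _]; apply. Qed.

Lemma vle_trans x y z : le x y -> le y z -> le x z.
Proof. by case: hVL => _ [_ [+ _]]; apply. Qed.

Lemma vle_add2r z x y : le x y -> le (x + z) (y + z).
Proof. by case: hVL => _ [_ [_ [+ _]]]; apply. Qed.

Lemma vle_scale (a : R) x y : 0 <= a -> le x y -> le (a *: x) (a *: y).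
Proof. by case: hVL => _ [_ [_ [_ [+ _]]]]; apply. Qed.

Lemma vlt_nle x y : lt le x y -> ~ le y x.
Proof. by case=> xy nxy yx; apply: nxy; apply: vle_anti. Qed.

Lemma vle_add2l z x y : le x y -> le (z + x) (z + y).
Proof. by rewrite ![z + _]addrC; apply: vle_add2r. Qed.

Lemma vle_add x y z t : le x y -> le z t -> le (x + z) (y + t).
Proof. by move=> xy zt; apply: vle_trans (vle_add2r z xy) (vle_add2l y zt). Qed.

Lemma vle_addr_ge0 x z : le 0 z -> le x (x + z).
Proof. by move=> z0; rewrite -{1}[x]addr0; apply: vle_add2l. Qed.

Lemma vle_subl_addr x y z : le (x - y) z <-> le x (z + y).
Proof.
by split=> [/(vle_add2r y)|/(vle_add2r (- y))]; rewrite ?subrK ?addrK.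
Qed.

Lemma vle_subr_addr x y z : le x (y - z) <-> le (x + z) y.
Proof.
by split=> [/(vle_add2r z)|/(vle_add2r (- z))]; rewrite ?subrK ?addrK.
Qed.

Lemma vsubr_ge0 x y : le 0 (y - x) <-> le x y.
Proof. by rewrite -[X in le X y](add0r x); apply: vle_subr_addr. Qed.

Lemma vsubr_le0 x y : le (x - y) 0 <-> le x y.
Proof. by rewrite -[X in le x X](add0r y); apply: vle_subl_addr. Qed.

Lemma vle_opp2 x y : le (- x) (- y) <-> le y x.
Proof.
split=> [/(vle_add2r (x + y))|/(vle_add2r (- x - y))].
  by rewrite addKr addrCA addNr addr0.
by rewrite addrCA subrr addr0 addrA subrr sub0r.
Qed.

Lemma vle_sub2l z x y : le (z - x) (z - y) <-> le y x.
Proof.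
split=> [/(vle_add2l (- z))|/vle_opp2/(vle_add2l z)] //.
by rewrite !addKr => /vle_opp2.
Qed.

Lemma in_interval_dist f g x :
  in_interval le (f - g) (f + g) x <-> le (x - f) g /\ le (f - x) g.
Proof.
split=> [[l r]|[l r]]; split.
- by apply/vle_subl_addr; rewrite addrC.
- by apply/vle_subl_addr; rewrite addrC; apply/vle_subl_addr.
- by apply/vle_subl_addr; rewrite addrC; apply/vle_subl_addr.
- by rewrite addrC; apply/vle_subl_addr.
Qed.

Lemma vle_scale_norm (a : R) u g :
  le u g -> le (- u) g -> le (a *: u) (`|a| *: g).
Proof.
move=> ug Nug; have [a0|a0] := lerP 0 a.
  by rewrite ger0_norm //; apply: vle_scale.
have -> : a *: u = - a *: - u by rewrite scaleNr scalerN opprK.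
by rewrite ltr0_norm //; apply: vle_scale => //; rewrite oppr_ge0 ltW.
Qed.

Lemma exists_vsup x y : exists s, is_sup_in le full (pair2 x y) s.
Proof. by case: hVL => _ [_ [_ [_ [_ /(_ x y) []]]]]. Qed.

Lemma exists_vinf x y : exists i, is_inf_in le full (pair2 x y) i.
Proof. by case: hVL => _ [_ [_ [_ [_ /(_ x y) []]]]]. Qed.

Definition vsup x y : V := sval (cid (exists_vsup x y)).
Definition vinf x y : V := sval (cid (exists_vinf x y)).
Definition ppart x : V := vsup x 0.

Lemma vsupP x y : is_sup_in le full (pair2 x y) (vsup x y).
Proof. by rewrite /vsup; case: cid. Qed.

Lemma vinfP x y : is_inf_in le full (pair2 x y) (vinf x y).
Proof. by rewrite /vinf; case: cid. Qed.

Lemma vsup_ge_l x y : le x (vsup x y).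
Proof. by case: (vsupP x y) => _ [+ _]; apply; left. Qed.

Lemma vsup_ge_r x y : le y (vsup x y).
Proof. by case: (vsupP x y) => _ [+ _]; apply; right. Qed.

Lemma vsup_le x y u : le x u -> le y u -> le (vsup x y) u.
Proof. by case: (vsupP x y) => _ [_ +] xu yu; apply=> // z [->|->]. Qed.

Lemma vinf_le_l x y : le (vinf x y) x.
Proof. by case: (vinfP x y) => _ [+ _]; apply; left. Qed.

Lemma vinf_le_r x y : le (vinf x y) y.
Proof. by case: (vinfP x y) => _ [+ _]; apply; right. Qed.

Lemma vinf_ge x y u : le u x -> le u y -> le u (vinf x y).
Proof. by case: (vinfP x y) => _ [_ +] ux uy; apply=> // z [->|->]. Qed.

Lemma is_sup_vsup x y s : is_sup_in le full (pair2 x y) s -> s = vsup x y.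
Proof.
case=> _ [sub sup]; apply: vle_anti.
  by apply: sup => // z [->|->]; [apply: vsup_ge_l | apply: vsup_ge_r].
by apply: vsup_le; apply: sub; [left | right].
Qed.

Lemma is_inf_vinf x y i : is_inf_in le full (pair2 x y) i -> i = vinf x y.
Proof.
case=> _ [sub inf]; apply: vle_anti.
  by apply: vinf_ge; apply: sub; [left | right].
by apply: inf => // z [->|->]; [apply: vinf_le_l | apply: vinf_le_r].
Qed.

Lemma vinf_oppE x y : vinf x y = - vsup (- x) (- y).
Proof.
suff /is_sup_vsup <- : is_sup_in le full (pair2 (- x) (- y)) (- vinf x y).
  by rewrite opprK.
split=> //; split=> [z [->|->]|u _ ub].
- by apply/vle_opp2; apply: vinf_le_l.
- by apply/vle_opp2; apply: vinf_le_r.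
rewrite -[u]opprK; apply/vle_opp2; apply: vinf_ge.
  by rewrite -[x]opprK; apply/vle_opp2; apply: ub; left.
by rewrite -[y]opprK; apply/vle_opp2; apply: ub; right.
Qed.

Lemma vle_add_sup_inf x y : le (x + y) (vsup x y + vinf x y).
Proof.
rewrite [vsup x y + _]addrC; apply: (vle_subl_addr _ _ _).1; apply: vinf_ge.
  rewrite -addrA -[X in le _ X]addr0; apply: vle_add2l.
  by apply/vsubr_le0; apply: vsup_ge_r.
rewrite addrAC -[X in le _ X]add0r; apply: vle_add2r.
by apply/vsubr_le0; apply: vsup_ge_l.
Qed.

Lemma ppart_ge x : le x (ppart x).
Proof. exact: vsup_ge_l. Qed.

Lemma ppart_ge0 x : le 0 (ppart x).
Proof. exact: vsup_ge_r. Qed.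

Lemma ppart_gt0 x : ~ le x 0 -> lt le 0 (ppart x).
Proof.
by move=> nx; split=> [|x0]; [apply: ppart_ge0 | apply: nx; rewrite x0; apply: ppart_ge].
Qed.

Lemma is_inf0_ge0 G g : is_inf_in le full G 0 -> G g -> le 0 g.
Proof. by case=> _ [+ _]; apply. Qed.

Lemma le_of_inf0 G x y :
  is_inf_in le full G 0 -> (forall k, G k -> le x (y + k)) -> le x y.
Proof.
case=> _ [_ inf] xy; apply/vsubr_le0; apply: inf => // k Gk.
by apply/vle_subl_addr; rewrite addrC; apply: xy.
Qed.

Lemma not_le_inf0 G v :
  is_inf_in le full G 0 -> ~ le v 0 -> exists2 k, G k & ~ le v k.
Proof.
move=> infG nv; apply: contrapT => nk; apply: nv.
apply: (le_of_inf0 infG) => k Gk; rewrite add0r.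
by apply: contrapT => nvk; apply: nk; exists k.
Qed.

Lemma is_inf0_scale_add (c : R) G1 G2 : 0 < c ->
  is_inf_in le full G1 0 -> is_inf_in le full G2 0 ->
  is_inf_in le full
    (fun k => exists g1 g2, [/\ G1 g1, G2 g2 & k = c *: (g1 + g2)]) 0.
Proof.
move=> c_gt0 inf1 inf2; split=> //; split=> [_ [g1 [g2 [G1g1 G2g2 ->]]]|y _ yG].
  rewrite -(scaler0 _ c) -(addr0 0); apply: vle_scale (ltW c_gt0) _.
  by apply: vle_add; [apply: is_inf0_ge0 inf1 _ | apply: is_inf0_ge0 inf2 _].
have cV_ge0 : 0 <= c^-1 by rewrite invr_ge0 ltW.
suff /(vle_scale (ltW c_gt0)) : le (c^-1 *: y) 0.
  by rewrite scalerA divff ?gt_eqF // scale1r scaler0.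
apply: (le_of_inf0 inf2) => g2 G2g2; rewrite add0r.
apply: (le_of_inf0 inf1) => g1 G1g1; rewrite addrC.
have /(vle_scale cV_ge0) : le y (c *: (g1 + g2)) by apply: yG; exists g1, g2.
by rewrite scalerA mulVf ?gt_eqF // scale1r.
Qed.

Section Sublattice.
Variable S : V -> Prop.
Hypothesis hS : sublattice le S.

Lemma sublattice0 : S 0.
Proof. by case: hS. Qed.

Lemma sublatticeD x y : S x -> S y -> S (x + y).
Proof. by case: hS => _ + _ _ _; apply. Qed.

Lemma sublatticeZ (a : R) x : S x -> S (a *: x).
Proof. by case: hS => _ _ + _ _; apply. Qed.

Lemma sublatticeB x y : S x -> S y -> S (x - y).
Proof.
by move=> Sx Sy; rewrite -scaleN1r; apply: sublatticeD => //; apply: sublatticeZ.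
Qed.

Lemma sublattice_vsup x y : S x -> S y -> S (vsup x y).
Proof. by case: hS => _ _ _ + _ Sx Sy; apply; last exact: vsupP. Qed.

Lemma sublattice_vinf x y : S x -> S y -> S (vinf x y).
Proof. by case: hS => _ _ _ _ + Sx Sy; apply; last exact: vinfP. Qed.

Lemma sublattice_ppart x : S x -> S (ppart x).
Proof. by move=> Sx; apply: sublattice_vsup => //; apply: sublattice0. Qed.

End Sublattice.

Lemma vsup_sub_le x y f h g1 g2 : le 0 g1 -> le 0 g2 ->
  le (x - f) g1 -> le (y - h) g2 -> le (vsup x y - vsup f h) (g1 + g2).
Proof.
move=> g1_ge0 g2_ge0 /vle_subl_addr xf /vle_subl_addr yh.
apply/vle_subl_addr; apply: vsup_le.
  apply: vle_trans xf _; apply: vle_add; [exact: vle_addr_ge0 | exact: vsup_ge_l].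
apply: vle_trans yh _; apply: vle_add; last exact: vsup_ge_r.
by rewrite addrC; apply: vle_addr_ge0.
Qed.

Definition segment_in (E : V -> Prop) h : V -> Prop :=
  fun a => E a /\ in_interval le 0 h a.

Definition sup_dense_in (E H : V -> Prop) :=
  forall h, H h -> le 0 h -> is_sup_in le full (segment_in E h) h.

Section OrderAdherence.
Variable E : V -> Prop.
Hypothesis hE : sublattice le E.
Local Notation Ebar := (order_adherence le E).

Lemma adherence_of_mem f : E f -> Ebar f.
Proof.
move=> Ef; exists unit, (fun _ _ => True), (fun _ => f).
split; [by split | split=> //].
exists (fun g => g = 0); split.
  by split=> //; split=> [_ ->|y _ /(_ 0 erefl)//]; apply: vle_refl.
by move=> _ ->; exists tt => _ _; rewrite subr0 addr0; split; apply: vle_refl.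
Qed.

Lemma adherence_map2 (op : V -> V -> V) (c : R) f h t :
  (forall x y, E x -> E y -> E (op x y)) -> 0 < c ->
  (forall x y g1 g2, le 0 g1 -> le 0 g2 ->
     in_interval le (f - g1) (f + g1) x -> in_interval le (h - g2) (h + g2) y ->
     in_interval le (t - c *: (g1 + g2)) (t + c *: (g1 + g2)) (op x y)) ->
  Ebar f -> Ebar h -> Ebar t.
Proof.
move=> Eop c_gt0 op_near [I [leI [x [dirI [Ex [K1 [inf1 conv1]]]]]]].
move=> [J [leJ [y [dirJ [Ey [K2 [inf2 conv2]]]]]]].
exists (I * J)%type, (fun p q => leI p.1 q.1 /\ leJ p.2 q.2).
exists (fun p => op (x p.1) (y p.2)); split; first exact: directed_prod.
split; first by move=> p; apply: Eop.
exists (fun k => exists g1 g2, [/\ K1 g1, K2 g2 & k = c *: (g1 + g2)]).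
split; first exact: is_inf0_scale_add.
move=> _ [g1 [g2 [K1g1 K2g2 ->]]].
have [i0 near_i0] := conv1 _ K1g1; have [j0 near_j0] := conv2 _ K2g2.
exists (i0, j0) => -[i j] /= [i0i j0j]; apply: op_near.
- exact: is_inf0_ge0 inf1 K1g1.
- exact: is_inf0_ge0 inf2 K2g2.
- exact: near_i0.
- exact: near_j0.
Qed.

Lemma adherence_add f h : Ebar f -> Ebar h -> Ebar (f + h).
Proof.
apply: (adherence_map2 (op := +%R) (c := 1) (sublatticeD hE) ltr01).
move=> x y g1 g2 _ _ /in_interval_dist[xf fx] /in_interval_dist[yh hy].
by apply/in_interval_dist; rewrite scale1r !opprD; split; rewrite addrACA; apply: vle_add.
Qed.

Lemma adherence_scale (a : R) f : Ebar f -> Ebar (a *: f).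
Proof.
move=> Ebf; have E0 := adherence_of_mem (sublattice0 hE).
apply: (adherence_map2 (op := fun x _ => a *: x) (c := `|a| + 1)) Ebf E0.
- by move=> x _ Ex _; apply: sublatticeZ.
- exact: ltr_wpDl (normr_ge0 a) ltr01.
move=> x _ g1 g2 g1_ge0 g2_ge0 /in_interval_dist[xf fx] _.
have g12_ge0 : le 0 (g1 + g2) by rewrite -(addr0 0); apply: vle_add.
have bound : le (`|a| *: g1) ((`|a| + 1) *: (g1 + g2)).
  rewrite scalerDl scale1r; apply: vle_trans (vle_addr_ge0 _ g12_ge0).
  exact: vle_scale (normr_ge0 a) (vle_addr_ge0 _ g2_ge0).
apply/in_interval_dist; rewrite -!scalerBr; split; apply: vle_trans bound.
  by apply: vle_scale_norm; rewrite ?opprB.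
by apply: vle_scale_norm; rewrite ?opprB.
Qed.

Lemma adherence_vsup f h : Ebar f -> Ebar h -> Ebar (vsup f h).
Proof.
apply: (adherence_map2 (op := vsup) (c := 1) (sublattice_vsup hE) ltr01).
move=> x y g1 g2 g1_ge0 g2_ge0 /in_interval_dist[xf fx] /in_interval_dist[yh hy].
by apply/in_interval_dist; rewrite scale1r; split; apply: vsup_sub_le.
Qed.

Lemma sublattice_adherence : sublattice le Ebar.
Proof.
split.
- exact: adherence_of_mem (sublattice0 hE).
- exact: adherence_add.
- exact: adherence_scale.
- by move=> f h s Ef Eh /is_sup_vsup ->; apply: adherence_vsup.
- move=> f h i Ef Eh /is_inf_vinf ->; rewrite vinf_oppE -scaleN1r.
  apply: adherence_scale; apply: adherence_vsup;
  by rewrite -scaleN1r; apply: adherence_scale.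
Qed.

Lemma adherence_directed_sup D p : (forall a, D a -> E a) -> (exists a, D a) ->
  (forall a b, D a -> D b -> exists c, [/\ D c, le a c & le b c]) ->
  is_sup_in le full D p -> Ebar p.
Proof.
move=> DE [a0 Da0] D_dir [_ [pD p_least]].
exists {a | D a}, (fun a b => le (sval a) (sval b)), sval; split.
  split=> [|a|a b c|[a Da] [b Db]]; first exact: inhabits (exist _ a0 Da0).
  - exact: vle_refl.
  - exact: vle_trans.
  - by have [c [Dc ac bc]] := D_dir a b Da Db; exists (exist _ c Dc).
split; first by move=> [a Da]; apply: DE.
exists (fun k => exists2 a, D a & k = p - a); split.
  split=> //; split=> [_ [a Da ->]|y _ yG]; first by apply/vsubr_ge0; apply: pD.
  have : le p (p - y).
    apply: p_least => // a Da; apply/vle_subr_addr; rewrite addrC.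
    by apply: (vle_subr_addr _ _ _).1; apply: yG; exists a.
  by rewrite -{1}[p]subr0 => /vle_sub2l.
move=> _ [a Da ->]; exists (exist _ a Da) => -[b Db] /= ab.
rewrite subKr; split=> //; apply: vle_trans (pD b Db) (vle_addr_ge0 _ _).
by apply/vsubr_ge0; apply: pD.
Qed.

Lemma archimedean_interval h e : le 0 h -> E e -> le 0 e ->
  (forall a, segment_in E h a -> le (a + e) h) -> e = 0.
Proof.
move=> h_ge0 Ee e_ge0 step; apply: (@hArch e h e_ge0) => n.
suff [_ [_ ]] : segment_in E h (n%:R *: e) by [].
elim: n => [|n [Ene [ne_ge0 ne_le]]].
  by rewrite scale0r; split; [apply: sublattice0 hE | split; [apply: vle_refl|]].
rewrite mulrSr scalerDl scale1r; split; first exact: sublatticeD.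
split; last exact: step.
by rewrite -(addr0 0); apply: vle_add.
Qed.

Hypothesis hreg : regular le E.

Lemma regular_pos_lower_bound D y : (forall z, D z -> E z) ->
  (forall z, D z -> le 0 z) -> is_lower_bound le D y -> ~ le y 0 ->
  exists e, [/\ E e, lt le 0 e & is_lower_bound le D e].
Proof.
move=> DE D_ge0 yD ny.
have [y' [Ey' y'D ny']] : exists y', [/\ E y', is_lower_bound le D y' & ~ le y' 0].
  apply: contrapT => none; apply: ny.
  have infE : is_inf_in le E D 0.
    split; first exact: sublattice0 hE.
    split=> // y' Ey' y'D; apply: contrapT => ny'; apply: none; by exists y'.
  by case: (hreg DE infE) => _ [_]; apply.
exists (ppart y'); split; [exact: sublattice_ppart | exact: ppart_gt0 |].
by move=> z Dz; apply: vsup_le; [apply: y'D | apply: D_ge0].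
Qed.

Lemma adherence_gap h u : Ebar h -> is_upper_bound le (segment_in E h) u ->
  ~ le h u -> exists e, [/\ E e, lt le 0 e &
    forall a, segment_in E h a -> le (a + e) h].
Proof.
case=> I [leI [x [[_ _ _ dirI] [Ex [K [infK convK]]]]]] ub nhu.
have [k0 Kk0 nk0] : exists2 k0, K k0 & ~ le (h - u) k0.
  by apply: not_le_inf0 infK _; move/vsubr_le0.
have [b0 near_b0] := convK k0 Kk0.
pose D z := exists a b, [/\ segment_in E h a, leI b0 b & z = ppart (x b - a)].
have [e [Ee e_gt0 eD]] : exists e, [/\ E e, lt le 0 e & is_lower_bound le D e].
  apply: (regular_pos_lower_bound (y := h - u - k0)).
  - move=> _ [a [b [[Ea _] _ ->]]].
    by apply: (sublattice_ppart hE); apply: (sublatticeB hE).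
  - by move=> _ [a [b [_ _ ->]]]; apply: ppart_ge0.
  - move=> _ [a [b [ha b0b ->]]]; apply: vle_trans (ppart_ge _).
    have [hk0_x _] := near_b0 b b0b.
    by rewrite addrAC; apply: vle_add hk0_x _; apply/vle_opp2; apply: ub.
  - by move/vsubr_le0.
exists e; split=> // a ha; apply: (le_of_inf0 infK) => k Kk.
have [bk near_bk] := convK k Kk; have [b [b0b bkb]] := dirI b0 bk.
have [_ x_le] := near_bk b bkb.
have e_le : le e (ppart (x b - a)) by apply: eD; exists a, b.
have : le e (h + k - a).
  apply: vle_trans e_le (vsup_le (vle_add2r _ x_le) _); apply/vsubr_ge0.
  case: ha => _ [_ ah]; apply: vle_trans ah (vle_addr_ge0 _ _).
  exact: is_inf0_ge0 infK Kk.
by move/vle_subr_addr; rewrite addrC.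
Qed.

Lemma sup_dense_adherence : sup_dense_in E Ebar.
Proof.
move=> h Ebh h_ge0; split=> //; split=> [a [_ []] //|u _ ub].
apply: contrapT => nhu.
have [e [Ee [e_ge0 e_neq0] step]] := adherence_gap Ebh ub nhu.
by apply: e_neq0; symmetry; apply: archimedean_interval step.
Qed.

Section SupDense.
Variable H : V -> Prop.
Hypothesis hH : sublattice le H.

Lemma sup_dense_of_regular : regular le H -> order_dense_in le E H ->
  sup_dense_in E H.
Proof.
move=> regH [EH denseH] p Hp p_ge0; split=> //; split=> [a [_ []] //|u _ ub].
pose G k := exists2 a, segment_in E p a & k = p - a.
have infG : is_inf_in le full G 0.
  apply: regH; first by move=> _ [a [Ea _] ->]; apply: sublatticeB => //; apply: EH.
  split; first exact: sublattice0 hH.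
  split=> [_ [a [_ [_ ap]] ->]|y Hy yG]; first exact/vsubr_ge0.
  apply: contrapT => ny.
  have [e [Ee [[e_ge0 e_neq0] e_le]]] :=
    denseH _ (sublattice_ppart hH Hy) (ppart_gt0 ny).
  apply: e_neq0; symmetry; apply: archimedean_interval p_ge0 Ee e_ge0 _ => a pa.
  have : le e (p - a).
    apply: vle_trans e_le (vsup_le _ _); first by apply: yG; exists a.
    by case: pa => _ [_ ap]; apply/vsubr_ge0.
  by move/vle_subr_addr; rewrite addrC.
apply: (le_of_inf0 infG) => _ [a pa ->].
by rewrite addrCA; apply: vle_addr_ge0; apply/vsubr_ge0; apply: ub.
Qed.

Hypothesis EH : forall e, E e -> H e.
Hypothesis sdH : sup_dense_in E H.

Lemma order_dense_of_sup_dense : order_dense_in le E H.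
Proof.
split=> [//|h Hh [h_ge0 h_neq0]]; apply: contrapT => none; apply: h_neq0.
have [_ [_ h_least]] := sdH Hh h_ge0; apply: vle_anti h_ge0 _.
apply: h_least => // a [Ea [a_ge0 ah]]; apply: contrapT => na.
have a_gt0 : lt le 0 a by split=> // a0; apply: na; rewrite -a0; apply: vle_refl.
by apply: none; exists a.
Qed.

Lemma adherence_of_sup_dense h : H h -> Ebar h.
Proof.
have Ebar_pos q : H q -> le 0 q -> Ebar q.
  move=> Hq q_ge0.
  apply: (adherence_directed_sup (D := segment_in E q)) (sdH Hq q_ge0).
  - by move=> a [].
  - by exists 0; split; [apply: sublattice0 hE | split; [apply: vle_refl|]].
  move=> a b [Ea [a_ge0 aq]] [Eb [_ bq]].
  exists (vsup a b); split; [|exact: vsup_ge_l|exact: vsup_ge_r].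
  split; first exact: sublattice_vsup.
  by split; [apply: vle_trans a_ge0 (vsup_ge_l _ _) | apply: vsup_le].
move=> Hh; rewrite -(subKr (ppart h) h).
apply: (sublatticeB sublattice_adherence); apply: Ebar_pos.
- exact: sublattice_ppart.
- exact: ppart_ge0.
- by apply: sublatticeB => //; apply: sublattice_ppart.
- by apply/vsubr_ge0; apply: ppart_ge.
Qed.

Lemma sup_dense_nondisjoint g w : H g -> le 0 g -> lt le 0 w -> le w g ->
  exists2 a, segment_in E g a & ~ le (vinf a w) 0.
Proof.
move=> Hg g_ge0 w_gt0 wg; apply: contrapT => none.
have [_ [_ g_least]] := sdH Hg g_ge0.
have : le g (g - w).
  apply: g_least => // a [Ea [a_ge0 ag]]; apply/vle_subr_addr.
  have inf_le0 : le (vinf a w) 0 by apply: contrapT => ninf; apply: none; exists a.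
  apply: vle_trans (vle_add_sup_inf a w) _; rewrite -[X in le _ X]addr0.
  by apply: vle_add => //; apply: vsup_le.
by rewrite -{1}[g]subr0 => /vle_sub2l; apply: vlt_nle w_gt0.
Qed.

Lemma sup_dense_pos_lower_bound G w : (forall g, G g -> H g) -> (exists g, G g) ->
  lt le 0 w -> is_lower_bound le G w ->
  exists e, [/\ E e, lt le 0 e & is_lower_bound le G e].
Proof.
move=> GH [g0 Gg0] w_gt0 wG.
have w_ge0 : le 0 w by case: w_gt0.
have g0_ge0 := vle_trans w_ge0 (wG _ Gg0).
have [a0 [Ea0 [a0_ge0 a0g0]] nw1] :=
  sup_dense_nondisjoint (GH _ Gg0) g0_ge0 w_gt0 (wG _ Gg0).
pose D z := exists g a, [/\ G g, segment_in E (a0 - vinf g a0) a & z = a0 - a].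
have m_le g a : segment_in E (a0 - vinf g a0) a -> le (vinf g a0) (a0 - a).
  case=> _ [_ /vle_subr_addr]; rewrite addrC; exact: (vle_subr_addr _ _ _).2.
have [e [Ee e_gt0 eD]] : exists e, [/\ E e, lt le 0 e & is_lower_bound le D e].
  apply: (regular_pos_lower_bound (y := vinf a0 w)) nw1.
  - by move=> _ [g [a [_ [Ea _] ->]]]; apply: sublatticeB.
  - move=> _ [g [a [Gg ga ->]]]; apply: vle_trans (m_le g a ga).
    by apply: vinf_ge => //; apply: vle_trans w_ge0 (wG _ Gg).
  - move=> _ [g [a [Gg ga ->]]]; apply: vle_trans (m_le g a ga).
    apply: vinf_ge; last exact: vinf_le_l.
    exact: vle_trans (vinf_le_r _ _) (wG _ Gg).
exists e; split=> // g Gg; apply: vle_trans (vinf_le_l g a0).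
have Hm : H (a0 - vinf g a0).
  by apply: sublatticeB (EH Ea0) (sublattice_vinf hH (GH _ Gg) (EH Ea0)).
have m_ge0 : le 0 (a0 - vinf g a0) by apply/vsubr_ge0; apply: vinf_le_r.
have [_ [_ m_least]] := sdH Hm m_ge0.
suff /vle_sub2l : le (a0 - vinf g a0) (a0 - e) by [].
apply: m_least => // a ga; apply/vle_subr_addr; rewrite addrC.
by apply: (vle_subr_addr _ _ _).1; apply: eD; exists g, a.
Qed.

Lemma regular_of_sup_dense : regular le H.
Proof.
move=> G GH infHG; split=> //; split=> [|y _ yG]; first by case: infHG => _ [].
have [G_ge0 G_least] : is_lower_bound le G 0 /\
    (forall z, H z -> is_lower_bound le G z -> le z 0) by case: infHG.
have [[g0 Gg0]|noG] := pselect (exists g, G g); last first.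
  have GE g : G g -> E g by move=> Gg; case: noG; exists g.
  have infEG : is_inf_in le E G 0.
    by split; [apply: sublattice0 hE | split=> // z Ez; apply/G_least/EH].
  by case: (hreg GE infEG) => _ [_]; apply.
apply: contrapT => ny.
have y_G : is_lower_bound le G (ppart y).
  by move=> g Gg; apply: vsup_le; [apply: yG | apply: G_ge0].
have [e [Ee e_gt0 eG]] :=
  sup_dense_pos_lower_bound GH (ex_intro _ g0 Gg0) (ppart_gt0 ny) y_G.
by apply: (vlt_nle e_gt0); apply: G_least => //; apply: EH.
Qed.

End SupDense.
End OrderAdherence.
End VectorLatticeTheory.

Theorem theorem9p1 (R : realType) (V : lmodType R) (le : V -> V -> Prop)
  (hVL : vector_lattice le) (hArch : archimedean le)
  (E : V -> Prop) (hE : sublattice le E) (hreg : regular le E) :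
  [/\ sublattice le (order_adherence le E),
      regular le (order_adherence le E),
      order_dense_in le E (order_adherence le E) &
      forall H : V -> Prop, sublattice le H -> regular le H ->
        order_dense_in le E H ->
        forall h, H h -> order_adherence le E h].
Proof.
have Ebar_sub := sublattice_adherence hVL hE.
have Ebar_sup_dense := sup_dense_adherence hVL hArch hE hreg.
have E_Ebar e : E e -> order_adherence le E e by apply: adherence_of_mem.
split=> //.
- exact: (regular_of_sup_dense hVL hE hreg Ebar_sub E_Ebar Ebar_sup_dense).
- exact: (order_dense_of_sup_dense hVL E_Ebar Ebar_sup_dense).
move=> H hH regH denseH.
have sdH := sup_dense_of_regular hVL hArch hE hH regH denseH.
exact: (adherence_of_sup_dense hVL hE hH sdH).
Qed.
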